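(* Let $w,k$ be positive integers and let $x$ be an integer with $2\le x\le p^k-1$. Let $N$ be the least period of the sequence $(T_n^i(x)\bmod p^w)_{i\ge0}$ and let $M=\max\{t\ge 0 : T_n^N(x)\equiv x\pmod{p^t}\}$. If $k>M$, then the least period of the sequence $(T_n^i(x)\bmod p^k)_{i\ge 0}$ is larger than $N$.
   Context: $p$ is a prime with $p>3$ and $n>1$ is an integer with $\gcd(n,p)=\gcd(n,p^2-1)=1$ (so $T_n$ induces a permutation of $\mathbb{Z}_{p^j}$ for every $j\ge1$). $T_n(x)\in\mathbb{Z}[x]$ is the Chebyshev polynomial of the first kind: $T_0=1$, $T_1=x$, $T_d=2xT_{d-1}-T_{d-2}$. $T_n^i$ is the $i$-fold composition of $T_n$ with itself ($T_n^0(x)=x$), evaluated over $\mathbb{Z}$; it equals $T_{n^i}$. The least period of $(T_n^i(x)\bmod p^j)_{i\ge0}$ is the least positive integer $N$ with $T_n^N(x)\equiv x\pmod{p^j}$. *)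

From mathcomp Require Import all_boot all_order all_algebra.
Set Implicit Arguments. Unset Strict Implicit. Unset Printing Implicit Defensive.
Import Order.TTheory GRing.Theory Num.Theory.
Local Open Scope ring_scope.

(* (T_d(x), T_{d+1}(x)) computed by the recurrence T_0 = 1, T_1 = x,
   T_{d+2} = 2 x T_{d+1} - T_d, evaluated over Z. *)
Fixpoint cheb_pair (d : nat) (x : int) : int * int :=
  match d with
  | O => (1, x)
  | S d' => let (a, b) := cheb_pair d' x in (b, 2 * x * b - a)
  end.

Definition cheb (d : nat) (x : int) : int := (cheb_pair d x).1.

Definition cheb_iter (n i : nat) (x : int) : int := iter i (cheb n) x.

Definition least_period (n p j : nat) (x : int) (N : nat) : Prop :=
  (0 < N)%N /\ (cheb_iter n N x == x %[mod (p ^ j)%N%:Z])%Z /\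
  (forall i : nat, (0 < i < N)%N -> ~~ (cheb_iter n i x == x %[mod (p ^ j)%N%:Z])%Z).

From mathcomp Require Import all_boot all_order all_algebra all_fingroup all_solvable.
From mathcomp Require Import ring zify.
Set Implicit Arguments. Unset Strict Implicit. Unset Printing Implicit Defensive.
Import Order.TTheory GRing.Theory Num.Theory.
Local Open Scope ring_scope.

(* The companion matrix C of the recurrence T_(d+2) = 2x T_(d+1) - T_d has
   determinant 1, so Lagrange's theorem in GL_2(F_p) gives C^g = 1 mod p for
   g = |GL_2(F_p)| = p (p-1)^2 (p+1), and raising to the p-th power gains one
   power of p at a time, so C^(g p^k) = 1 mod p^(k+1). Hence T_d(x) mod p^k is
   periodic in d with period m = g p^k. Since n is prime to m, n^phi(m) = 1
   mod m, and T_n^i = T_(n^i) then yields a period of (T_n^i(x) mod p^k).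
   Its least period N' is also a period mod p^w because w <= M < k, so
   N <= N'; and N' = N would give T_n^N(x) = x mod p^k, contradicting the
   maximality of M. *)

Lemma chebSS d x : cheb d.+2 x = 2 * x * cheb d.+1 x - cheb d x.
Proof. by rewrite /cheb /=; case: (cheb_pair d x). Qed.

Lemma cheb_mul x m n :
  2 * cheb (m + n) x * cheb n x = cheb (m + n + n) x + cheb m x.
Proof.
elim/ltn_ind: n m => -[|[|n]] IH m.
- by rewrite !addn0 /cheb /=; ring.
- by rewrite !addn1 chebSS; ring.
transitivity (2 * x * (2 * cheb (m.+1 + n.+1) x * cheb n.+1 x)
              - 2 * cheb (m.+2 + n) x * cheb n x).
  by rewrite !addSn !addnS (chebSS n); ring.
by rewrite !IH // !addSn !addnS !chebSS; ring.
Qed.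

Lemma cheb_comp x a b : cheb a (cheb b x) = cheb (a * b) x.
Proof.
elim/ltn_ind: a => -[|[|a]] IH; rewrite ?mul1n //.
by rewrite chebSS !IH // !mulSnr mulrAC cheb_mul addrK.
Qed.

Lemma cheb_iterE n i x : cheb_iter n i x = cheb (n ^ i) x.
Proof.
elim: i => [|i IH] //.
by rewrite /cheb_iter iterS -/(cheb_iter n i x) IH cheb_comp expnS.
Qed.

Lemma expr1D_mod_sqr (R : pzRingType) (y : R) (q : nat) :
  exists F : R, (1 + y) ^+ q = 1 + y *+ q + y ^+ 2 * F.
Proof.
elim: q => [|q [F IH]]; first by exists 0; rewrite mulr0n mulr0 !addr0.
exists (F + q%:R + F * y).
rewrite exprSr IH !mulrDl !mulrDr !mul1r !mulr1 mulrnAl -expr2 mulr_natr mulrA mulrS.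
by rewrite !addrA; congr (_ + _); apply: addrAC.
Qed.

Lemma expr1D_natM (R : pzRingType) (c : nat) (z : R) (l : nat) :
  exists w : R, (1 + c%:R * z) ^+ l = 1 + c%:R * w.
Proof.
elim: l => [|l [w IH]]; first by exists 0; rewrite mulr0 addr0.
exists (w + z + w * c%:R * z).
by rewrite exprSr IH mulrDl mul1r mulrDr mulr1 !mulrDr !mulrA !addrA (addrAC 1).
Qed.

Lemma expr1D_lift (R : pzRingType) (p j : nat) (z : R) :
  exists w : R, (1 + (p ^ j.+1)%:R * z) ^+ p = 1 + (p ^ j.+2)%:R * w.
Proof.
have [F ->] := expr1D_mod_sqr ((p ^ j.+1)%:R * z) p.
exists (z + (p ^ j)%:R * z ^+ 2 * F).
rewrite exprMn_comm; last exact/commr_sym/commr_nat.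
rewrite -mulrnAl -mulr_natr -natrM -expnSr -natrX -expnM.
rewrite [(j.+1 * 2)%N]muln2 -addnn addSnnS addnC expnD natrM.
by rewrite mulrDr !mulrA addrA.
Qed.

Lemma expr1D_expn (R : pzRingType) (p i : nat) (z : R) :
  exists w : R, (1 + p%:R * z) ^+ (p ^ i) = 1 + (p ^ i.+1)%:R * w.
Proof.
elim: i => [|i [w IH]]; first by exists z; rewrite expn1.
by rewrite expnSr exprM IH; apply: expr1D_lift.
Qed.

Lemma int_mx_Fp_eq0 (p m n : nat) (B : 'M[int]_(m, n)) :
  prime p -> map_mx (intr : int -> 'F_p) B = 0 -> exists D, B = D *+ p.
Proof.
move=> p_pr B0; exists (\matrix_(i, j) (B i j %/ p)%Z); apply/matrixP => i j.
rewrite mulmxnE mxE -mulr_natr natz divzK // (dvdz_pcharf (pchar_Fp p_pr)).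
by move/matrixP/(_ i j): B0; rewrite !mxE => ->.
Qed.

Lemma int_mx_expr_card_GL (n p : nat) (A : 'M[int]_n.+1) :
  prime p -> map_mx (intr : int -> 'F_p) A \in unitmx ->
  exists D, A ^+ #|'GL_n.+1(p)%g| = 1 + p%:R * D.
Proof.
move=> p_pr Au.
have : map_mx (intr : int -> 'F_p) (A ^+ #|'GL_n.+1(p)%g| - 1) = 0.
  pose g : {'GL_n.+1(p)} := FinRing.Unit Au.
  have := congr1 val (expg_cardG (in_setT g)); rewrite FinRing.val_unitX /= => AmE.
  by rewrite rmorphB rmorph1 rmorphXn /= AmE subrr.
case/(int_mx_Fp_eq0 p_pr) => D AmE.
by exists D; rewrite mulr_natl -AmE addrC subrK.
Qed.

Lemma mulmx2E (R : pzSemiRingType) (A B : 'M[R]_2) i j :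
  (A *m B) i j = A i 0 * B 0 j + A i 1 * B 1 j.
Proof.
rewrite mxE !big_ord_recl big_ord0 addr0.
by have -> : lift ord0 ord0 = 1 :> 'I_2 by apply: val_inj.
Qed.

Definition cheb_mx (x : int) : 'M[int]_2 :=
  \matrix_(i, j) if i == 0 then (if j == 0 then 0 else -1)
                 else (if j == 0 then 1 else 2 * x).

Lemma cheb_pair_mx d x :
  cheb_pair d x = let A := cheb_mx x ^+ d in (A 0 0 + x * A 1 0, A 0 1 + x * A 1 1).
Proof.
elim: d => [|d /= ->]; first by rewrite /= !mxE /= mulr0 mulr1 addr0 add0r.
by rewrite exprSr -mulmxE !mulmx2E !mxE /=; congr pair; ring.
Qed.

Lemma cheb_mxE d x : cheb d x = (cheb_mx x ^+ d) 0 0 + x * (cheb_mx x ^+ d) 1 0.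
Proof. by rewrite /cheb cheb_pair_mx. Qed.

Lemma cheb_mx_unit (R : comUnitRingType) (f : {rmorphism int -> R}) x :
  map_mx f (cheb_mx x) \in unitmx.
Proof.
pose B : 'M[int]_2 := \matrix_(i, j) if i == 0 then (if j == 0 then 2 * x else 1)
                                     else (if j == 0 then -1 else 0).
have CB : cheb_mx x *m B = 1%:M.
  apply/matrixP => i j; rewrite mulmx2E !mxE.
  by case: i => [[|[|i]] ?] //; case: j => [[|[|j]] ?] //=; ring.
have : map_mx f (cheb_mx x) *m map_mx f B = 1%:M by rewrite -map_mxM CB map_mx1.
by case/mulmx1_unit.
Qed.

Lemma cheb_mx_expr_card_GL p k x : prime p ->
  exists D, cheb_mx x ^+ (#|'GL_2(p)%g| * p ^ k) = 1 + (p ^ k.+1)%:R * D.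
Proof.
move=> p_pr; rewrite exprM.
by have [D ->] := int_mx_expr_card_GL p_pr (cheb_mx_unit _ x); apply: expr1D_expn.
Qed.

Lemma cheb_mod_period x (q m j d : nat) (D : 'M[int]_2) :
  cheb_mx x ^+ m = 1 + q%:R * D -> (cheb (m * j + d) x == cheb d x %[mod q%:Z])%Z.
Proof.
move=> CmE; have [W CmjE] := expr1D_natM q D j.
rewrite !cheb_mxE; set A := cheb_mx x ^+ d.
have -> : cheb_mx x ^+ (m * j + d) = A + (W * A) *+ q.
  by rewrite exprD exprM CmE CmjE mulrDl mul1r -mulrA mulr_natl.
rewrite !mxE !mulmxnE eqz_mod_dvd; apply/dvdzP.
by exists ((W * A) 0 0 + x * (W * A) 1 0); rewrite -natz; ring.
Qed.

Lemma eqz_mod_expn_leq (p s t : nat) (a b : int) : (t <= s)%N ->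
  (a == b %[mod (p ^ s)%N%:Z])%Z -> (a == b %[mod (p ^ t)%N%:Z])%Z.
Proof. by move=> ts; rewrite !eqz_mod_dvd; apply: dvdz_trans; rewrite dvdzE dvdn_exp2l. Qed.

Lemma cheb_iter_mod_periodic (p n k : nat) (x : int) :
  prime p -> coprime n p -> coprime n (p ^ 2 - 1) ->
  exists i, (0 < i)%N && (cheb_iter n i x == x %[mod (p ^ k)%N%:Z])%Z.
Proof.
move=> p_pr np np21; set m := (#|'GL_2(p)%g| * p ^ k)%N.
have cardGL : #|'GL_2(p)%g| = (p * (p.-1 ^ 2 * p.+1))%N.
  by rewrite card_GL_2 (card_Fp p_pr) mulnA.
have p_gt1 := prime_gt1 p_pr.
have m_gt1 : (1 < m)%N.
  rewrite /m cardGL -mulnA (leq_trans p_gt1) // leq_pmulr // !muln_gt0 expn_gt0.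
  by rewrite (ltnW p_gt1) /= andbT; lia.
have nm : coprime n m.
  rewrite -(exp1n 2) subn_sqr subn1 addn1 coprimeMr in np21.
  by rewrite /m cardGL !coprimeMr np (coprimeXr _ np); case/andP: np21 => -> ->.
have [D CmE] := cheb_mx_expr_card_GL k x p_pr.
exists (totient m); rewrite totient_gt0 (ltnW m_gt1) /=.
rewrite cheb_iterE (divn_eq (n ^ totient m) m) Euler_exp_totient // modn_small //.
by apply: eqz_mod_expn_leq (leqnSn k) _; rewrite mulnC (cheb_mod_period _ 1 CmE).
Qed.

Lemma least_period_exists n p j x :
  (exists i, (0 < i)%N && (cheb_iter n i x == x %[mod (p ^ j)%N%:Z])%Z) ->
  exists N, least_period n p j x N.
Proof.
move=> ex; have [N /andP[N_gt0 HN] Nmin] := ex_minnP ex.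
exists N; split=> //; split=> // i /andP[i_gt0 iN]; apply/negP => Hi.
by have := Nmin i; rewrite i_gt0 Hi leqNgt iN => /(_ isT).
Qed.

Lemma least_period_leq n p j x N i : least_period n p j x N ->
  (0 < i)%N -> (cheb_iter n i x == x %[mod (p ^ j)%N%:Z])%Z -> (N <= i)%N.
Proof.
case=> _ [_ Nmin] i_gt0 Hi; rewrite leqNgt; apply/negP => iN.
by have := Nmin i; rewrite i_gt0 iN Hi => /(_ isT).
Qed.

Theorem lemma10 (p n w k : nat) (x : int) (N M : nat) :
  prime p -> (3 < p)%N -> (1 < n)%N ->
  coprime n p -> coprime n (p ^ 2 - 1) ->
  (0 < w)%N -> (0 < k)%N ->
  2 <= x -> x <= (p ^ k)%N%:Z - 1 ->
  least_period n p w x N ->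
  (* M = max { t >= 0 : T_n^N(x) = x mod p^t } *)
  (cheb_iter n N x == x %[mod (p ^ M)%N%:Z])%Z ->
  (forall t : nat, (cheb_iter n N x == x %[mod (p ^ t)%N%:Z])%Z -> (t <= M)%N) ->
  (M < k)%N ->
  exists N' : nat, least_period n p k x N' /\ (N < N')%N.
Proof.
move=> p_pr _ _ np np21 _ _ _ _ perN _ Mmax Mk.
have [N' perN'] := least_period_exists (cheb_iter_mod_periodic k x p_pr np np21).
exists N'; split=> //; have [N'_gt0 [HN' _]] := perN'.
have wk : (w <= k)%N.
  by apply: leq_trans (ltnW Mk); apply: Mmax; case: perN => _ [].
have NN' : (N <= N')%N.
  exact: least_period_leq perN N'_gt0 (eqz_mod_expn_leq wk HN').
rewrite ltn_neqAle NN' andbT; apply/eqP => NE.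
by have := Mmax k; rewrite NE HN' leqNgt Mk => /(_ isT).
Qed.
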